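(* Let $\mathcal{K}$ be a class of similar algebras and let $e$ be a unary term such that every algebra in $\mathcal{K}$ satisfies $e(e(x))=e(x)$ and is separated by $e$. Let $\mathcal{E}$ be the full subcategory of $\mathrm{ISP}(\mathcal{K})$ whose objects are the algebras in $\mathrm{ISP}(\mathcal{K})$ for which $e$ is dense. Then for an algebra $\mathbf{P}$ the following are equivalent: (a) $\mathbf{P}\in\mathcal{V}(\mathcal{K})$, $\mathbf{P}$ is projective in $\mathcal{V}(\mathcal{K})$, and $e$ is dense for $\mathbf{P}$; (b) $\mathbf{P}$ is an object of $\mathcal{E}$ and $\mathbf{P}$ is projective in $\mathcal{E}$.
   Context: $\mathcal{V}(\mathcal{K})$ is the variety generated by $\mathcal{K}$, and $\mathrm{ISP}(\mathcal{K})$ is the class of isomorphic copies of subalgebras of products of members of $\mathcal{K}$. A category of algebras is a full subcategory of the category of all algebras of a given language. If $\mathcal{P}$ is a category of algebras, $\mathbf{P}\in\mathcal{P}$ is projective in $\mathcal{P}$ if for all $\mathbf{A},\mathbf{B}\in\mathcal{P}$, every surjective homomorphism $\sigma:\mathbf{A}\to\mathbf{B}$ and every homomorphism $\varphi:\mathbf{P}\to\mathbf{B}$, there is a homomorphism $\bar\varphi:\mathbf{P}\to\mathbf{A}$ with $\sigma\circ\bar\varphi=\varphi$. The term $e$ separates $\mathbf{A}$ if for all $a\neq b$ in $A$ there is a unary term $g$ with $e(g(a))\neq e(g(b))$; $e$ is dense for $\mathbf{A}$ if $\mathbf{A}$ is generated by $e(A)$. *)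

From mathcomp Require Import all_boot.
Set Implicit Arguments. Unset Strict Implicit. Unset Printing Implicit Defensive.

Record signature := Signature { ops : Type; arity : ops -> nat }.

Record algebra (S : signature) := Algebra {
  carrier :> Type;
  interp : forall f : ops S, ('I_(arity f) -> carrier) -> carrier }.
Arguments interp {S} a f _.

Section UA.
Variable S : signature.

(** Homomorphisms (full subcategories: every homomorphism is a morphism). *)
Definition is_hom (A B : algebra S) (h : A -> B) : Prop :=
  forall (f : ops S) (args : 'I_(arity f) -> A),
    h (interp A f args) = interp B f (fun i => h (args i)).

Definition surjective (A B : Type) (h : A -> B) : Prop :=
  forall b, exists a, h a = b.

Definition prod_alg (I : Type) (F : I -> algebra S) : algebra S :=
  @Algebra S (forall i, F i)
    (fun f args => fun i => interp (F i) f (fun j => args j i)).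

(** ISP(K): isomorphic copies of subalgebras of products of members of K,
    i.e. algebras embedding (injective homomorphism) into such a product. *)
Definition ISP (K : algebra S -> Prop) (A : algebra S) : Prop :=
  exists (I : Type) (F : I -> algebra S), (forall i, K (F i)) /\
  exists h : A -> prod_alg F, is_hom (B := prod_alg F) h /\ injective h.

(** V(K) = HSP(K) = H(ISP(K)) (variety generated by K, Tarski/Birkhoff). *)
Definition variety_gen (K : algebra S -> Prop) (A : algebra S) : Prop :=
  exists (B : algebra S) (h : B -> A), ISP K B /\ is_hom h /\ surjective h.

Inductive term (X : Type) : Type :=
| Var : X -> term X
| App : forall f : ops S, ('I_(arity f) -> term X) -> term X.

Fixpoint eval (X : Type) (A : algebra S) (v : X -> A) (t : term X) : A :=
  match t with
  | Var x => v x
  | App f ts => interp A f (fun i => eval v (ts i))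
  end.

Definition unary_term := term unit.
Definition term_op (e : unary_term) (A : algebra S) (a : A) : A :=
  eval (fun _ => a) e.
Arguments term_op e A a : clear implicits.

Definition separates (e : unary_term) (A : algebra S) : Prop :=
  forall a b : A, a <> b ->
    exists g : unary_term, term_op e A (term_op g A a) <> term_op e A (term_op g A b).

Definition subuniverse (A : algebra S) (B : A -> Prop) : Prop :=
  forall (f : ops S) (args : 'I_(arity f) -> A),
    (forall i, B (args i)) -> B (interp A f args).

Definition generated_by (A : algebra S) (X : A -> Prop) : Prop :=
  forall B : A -> Prop, subuniverse B -> (forall x, X x -> B x) -> forall x, B x.

Definition dense (e : unary_term) (A : algebra S) : Prop :=
  generated_by (fun x => exists a : A, x = term_op e A a).

Definition projective_in (C : algebra S -> Prop) (P : algebra S) : Prop :=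
  C P /\
  forall (A B : algebra S) (sigma : A -> B) (phi : P -> B),
    C A -> C B -> is_hom sigma -> surjective sigma -> is_hom phi ->
    exists phibar : P -> A, is_hom phibar /\ forall x, sigma (phibar x) = phi x.

End UA.

Arguments term_op {S} e A a.
Arguments unary_term S : clear implicits.

From mathcomp Require Import all_boot.
From Stdlib Require Import ProofIrrelevance FunctionalExtensionality IndefiniteDescription.
Set Implicit Arguments. Unset Strict Implicit.

(** (a) => (b): a projective algebra of V(K) is a retract of an ISP(K)-algebra
    covering it, hence embeds into it and lies in ISP(K).
    (b) => (a): a surjection [sigma : A ->> B] with [A] in ISP(K), together with
    [phi : P -> B], is lifted by applying projectivity of [P] in E to the first
    projection of the subalgebra [C] of [P x A] generated by the e-image of the
    pullback [{(p, a) | phi p = sigma a}]. As [e] is idempotent on [P x A] this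
    generating set consists of fixed points of [e], so [e] is dense for [C]; the
    projection [C -> P] hits [e(P)], hence is onto because [e] is dense for [P];
    and [C] lies inside the pullback, so the second coordinate of the splitting
    lifts [phi]. Arbitrary [A] in V(K) are handled through an ISP(K) cover. *)

Section UniversalAlgebra.
Variable S : signature.
Implicit Types A B C P : algebra S.

Lemma hom_eval A B (h : A -> B) (X : Type) (v : X -> A) (t : term S X) :
  is_hom h -> h (eval v t) = eval (fun x => h (v x)) t.
Proof.
move=> hom_h; elim: t => [x|f ts IH] //=.
by rewrite hom_h; congr (interp B f); apply: functional_extensionality => i.
Qed.

Lemma hom_term_op A B (h : A -> B) (t : unary_term S) (a : A) :
  is_hom h -> h (term_op t A a) = term_op t B (h a).
Proof. by move=> hom_h; rewrite /term_op hom_eval. Qed.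

Lemma id_hom A : is_hom (fun x : A => x).
Proof. by []. Qed.

Lemma comp_hom A B C (g : A -> B) (h : B -> C) :
  is_hom g -> is_hom h -> is_hom (fun x => h (g x)).
Proof. by move=> hom_g hom_h f args; rewrite hom_g hom_h. Qed.

Lemma prod_term_op (I : Type) (F : I -> algebra S) (t : unary_term S)
    (x : prod_alg F) (i : I) :
  term_op t (prod_alg F) x i = term_op t (F i) (x i).
Proof. exact: (@hom_term_op (prod_alg F) (F i) (fun y => y i)). Qed.

Lemma subuniverse_term_op A (T : A -> Prop) (t : unary_term S) (a : A) :
  subuniverse T -> T a -> T (term_op t A a).
Proof.
by move=> subT Ta; rewrite /term_op; elim: t => [[]|f ts IH] //=; apply: subT.
Qed.

Definition pair_alg A B : algebra S :=
  @Algebra S (A * B)%type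
    (fun f args => (interp A f (fun i => (args i).1), interp B f (fun i => (args i).2))).

Lemma fst_hom A B : is_hom (A := pair_alg A B) (B := A) fst.
Proof. by []. Qed.

Definition sub_alg A (T : A -> Prop) (subT : subuniverse T) : algebra S :=
  @Algebra S {x : A | T x}
    (fun f args => exist T (interp A f (fun i => sval (args i)))
                     (subT f _ (fun i => proj2_sig (args i)))).

Section SubAlgebra.
Variables (A : algebra S) (T : A -> Prop) (subT : subuniverse T).

Lemma sval_hom : is_hom (A := sub_alg subT) (B := A) sval.
Proof. by []. Qed.

Lemma sval_inj : injective (fun y : sub_alg subT => sval y).
Proof. by move=> [x Tx] [y Ty] /= eq_xy; subst; congr exist; apply: proof_irrelevance. Qed.

End SubAlgebra.
Arguments sval_hom {A T} subT.
Arguments sval_inj {A T} subT.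

Definition Sg A (X : A -> Prop) (x : A) : Prop :=
  forall T : A -> Prop, subuniverse T -> (forall z, X z -> T z) -> T x.

Lemma Sg_subuniverse A (X : A -> Prop) : subuniverse (Sg X).
Proof. by move=> f args Sg_args T subT XT; apply: (subT) => i; apply: Sg_args. Qed.
Arguments Sg_subuniverse {A} X.

Lemma Sg_incl A (X : A -> Prop) x : X x -> Sg X x.
Proof. by move=> Xx T _; apply. Qed.

Lemma generated_by_Sg A (X : A -> Prop) :
  generated_by (A := sub_alg (Sg_subuniverse X)) (fun y => X (sval y)).
Proof.
move=> T subT XT [x Sg_x].
pose T' x := Sg X x /\ forall Sg_x : Sg X x, T (exist _ x Sg_x).
suff [_] : T' x by apply.
apply: Sg_x => [f args T'_args|z Xz]; last first.
  by split=> [|Sg_z]; [apply: Sg_incl | apply: XT].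
have Sg_args i := proj1 (T'_args i).
split=> [|Sg_fx]; first exact: Sg_subuniverse.
have -> : exist _ (interp A f args) Sg_fx =
          interp (sub_alg (Sg_subuniverse X)) f (fun i => exist _ (args i) (Sg_args i)).
  exact: (sval_inj (Sg_subuniverse X)).
by apply: subT => i; apply: (proj2 (T'_args i)).
Qed.
Arguments generated_by_Sg {A} X.

Lemma generated_by_mono A (X Y : A -> Prop) :
  (forall x, X x -> Y x) -> generated_by X -> generated_by Y.
Proof. by move=> XY genX T subT YT; apply: genX => // x /XY /YT. Qed.

Lemma dense_Sg_fixed A (e : unary_term S) (X : A -> Prop) :
  (forall x, X x -> term_op e A x = x) -> dense e (sub_alg (Sg_subuniverse X)).
Proof.
move=> eX; pose C := sub_alg (Sg_subuniverse X).
have X_fixed (y : C) : X (sval y) -> exists a : C, y = term_op e C a.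
  move=> Xy; exists y; apply: (sval_inj (Sg_subuniverse X)).
  by rewrite (hom_term_op _ _ (sval_hom _)) eX.
exact (generated_by_mono X_fixed (generated_by_Sg X)).
Qed.

Lemma hom_image_subuniverse A B (h : A -> B) :
  is_hom h -> subuniverse (fun b => exists a, h a = b).
Proof.
move=> hom_h f args im_args.
pose pre i := proj1_sig (constructive_indefinite_description _ (im_args i)).
exists (interp A f pre); rewrite hom_h; congr (interp B f).
apply: functional_extensionality => i.
exact: (proj2_sig (constructive_indefinite_description _ (im_args i))).
Qed.

Lemma dense_hom_surjective (e : unary_term S) A P (h : A -> P) :
  is_hom h -> dense e P -> (forall p, exists a, h a = term_op e P p) -> surjective h.
Proof.
move=> hom_h dense_P im_e.
by apply: (dense_P _ (hom_image_subuniverse hom_h)) => _ [q ->].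
Qed.

Section ISP.
Variable K : algebra S -> Prop.

Lemma ISP_variety_gen A : ISP K A -> variety_gen K A.
Proof. by move=> ISP_A; exists A, id; do !split=> //; move=> b; exists b. Qed.

Lemma ISP_embedding A B (g : A -> B) : is_hom g -> injective g -> ISP K B -> ISP K A.
Proof.
move=> hom_g inj_g [I [F [KF [h [hom_h inj_h]]]]]; exists I, F; split=> //.
by exists (fun a => h (g a)); split; [apply: comp_hom | move=> a b /inj_h /inj_g].
Qed.

Lemma ISP_sub_alg A (T : A -> Prop) (subT : subuniverse T) :
  ISP K A -> ISP K (sub_alg subT).
Proof. exact: ISP_embedding (sval_hom subT) (sval_inj subT). Qed.

Lemma ISP_pair A B : ISP K A -> ISP K B -> ISP K (pair_alg A B).
Proof.
move=> [I [F [KF [h [hom_h inj_h]]]]] [J [G [KG [k [hom_k inj_k]]]]].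
pose H ij := match ij with inl i => F i | inr j => G j end.
exists (I + J)%type, H; split; first by case.
exists (fun ab ij => match ij as ij return H ij with
                     inl i => h ab.1 i | inr j => k ab.2 j end); split.
  by move=> f args; apply: functional_extensionality_dep => -[i|j] /=;
    [rewrite hom_h | rewrite hom_k].
move=> [a b] [a' b'] eq_hk.
have eq_h : h a = h a'.
  by apply: functional_extensionality_dep => i; apply: (congr1 (fun u => u (inl i)) eq_hk).
have eq_k : k b = k b'.
  by apply: functional_extensionality_dep => j; apply: (congr1 (fun u => u (inr j)) eq_hk).
by rewrite (inj_h _ _ eq_h) (inj_k _ _ eq_k).
Qed.

Lemma ISP_term_idem (e : unary_term S) :
  (forall A, K A -> forall a : A, term_op e A (term_op e A a) = term_op e A a) ->
  forall A, ISP K A -> forall a : A, term_op e A (term_op e A a) = term_op e A a.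
Proof.
move=> e_idem A [I [F [KF [h [hom_h inj_h]]]]] a; apply: inj_h.
rewrite !(hom_term_op _ _ hom_h); apply: functional_extensionality_dep => i.
by rewrite !prod_term_op e_idem.
Qed.

End ISP.

Lemma projective_in_sub (C C' : algebra S -> Prop) P :
  (forall A, C' A -> C A) -> C' P -> projective_in C P -> projective_in C' P.
Proof.
move=> C'C C'P [_ lift]; split=> // A B sigma phi C'A C'B.
exact: lift (C'C _ C'A) (C'C _ C'B).
Qed.

Lemma projective_variety_gen_ISP (K : algebra S -> Prop) P :
  projective_in (variety_gen K) P -> ISP K P.
Proof.
move=> [V_P lift]; have [B [h [ISP_B [hom_h sur_h]]]] := V_P.
have [s [hom_s hs]] :=
  lift B P h id (ISP_variety_gen ISP_B) V_P hom_h sur_h (@id_hom P).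
by apply: ISP_embedding hom_s _ ISP_B => x y eq_s; rewrite -(hs x) -(hs y) eq_s.
Qed.

Section DenseLift.
Variables (K : algebra S -> Prop) (e : unary_term S).
Hypothesis e_idem :
  forall A, K A -> forall a : A, term_op e A (term_op e A a) = term_op e A a.

Let E A := ISP K A /\ dense e A.

Lemma projective_dense_lift P A B (sigma : A -> B) (phi : P -> B) :
  projective_in E P -> ISP K A -> is_hom sigma -> surjective sigma -> is_hom phi ->
  exists psi : P -> A, is_hom psi /\ forall x, sigma (psi x) = phi x.
Proof.
move=> proj_P ISP_A hom_sigma sur_sigma hom_phi.
have [[ISP_P dense_P] lift] := proj_P.
pose D := pair_alg P A.
pose pullback (c : D) := phi c.1 = sigma c.2.
pose X z := exists2 c : D, pullback c & z = term_op e D c.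
have ISP_D : ISP K D by apply: ISP_pair.
have pullback_sub : subuniverse pullback.
  move=> f args pb_args; rewrite /pullback /= hom_phi hom_sigma.
  by congr (interp B f); apply: functional_extensionality.
have X_pullback z : X z -> pullback z.
  by move=> [c pb_c ->]; apply: subuniverse_term_op.
pose Cg := sub_alg (Sg_subuniverse X).
have E_Cg : E Cg.
  split; first exact: ISP_sub_alg.
  by apply: dense_Sg_fixed => _ [c _ ->]; apply: (ISP_term_idem e_idem ISP_D).
pose pr (y : Cg) := (sval y).1.
have hom_pr : is_hom pr by [].
have sur_pr : surjective pr.
  apply: (dense_hom_surjective hom_pr dense_P) => p.
  have [a sigma_a] := sur_sigma (phi p).
  have X_ea : X (term_op e D (p, a)) by exists (p, a); rewrite // /pullback sigma_a.
  exists (exist _ _ (Sg_incl X_ea)).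
  exact: (hom_term_op _ _ (@fst_hom P A)).
have [s [hom_s pr_s]] := lift Cg P pr id E_Cg (conj ISP_P dense_P) hom_pr sur_pr (@id_hom P).
exists (fun x => (sval (s x)).2); split; first by move=> f args /=; rewrite hom_s.
move=> x; have <- : phi (pr (s x)) = sigma (sval (s x)).2.
  exact: (proj2_sig (s x) _ pullback_sub X_pullback).
by rewrite pr_s.
Qed.

End DenseLift.

End UniversalAlgebra.

Theorem theorem4p1 (S : signature) (K : algebra S -> Prop) (e : unary_term S)
  (He_idem : forall A, K A -> forall a : A, term_op e A (term_op e A a) = term_op e A a)
  (He_sep : forall A, K A -> separates e A)
  (P : algebra S) :
  let E := fun A => ISP K A /\ dense e A in
  (variety_gen K P /\ projective_in (variety_gen K) P /\ dense e P)
  <-> (E P /\ projective_in E P).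
Proof.
move=> E; split.
  move=> [_ [proj_P dense_P]].
  have E_P : E P by split; first exact: projective_variety_gen_ISP proj_P.
  split=> //; apply: projective_in_sub proj_P => // A [ISP_A _].
  exact: ISP_variety_gen.
move=> [[ISP_P dense_P] proj_P]; have V_P := ISP_variety_gen ISP_P.
split=> //; split=> //; split=> // A B sigma phi [A' [q [ISP_A' [hom_q sur_q]]]] _.
move=> hom_sigma sur_sigma hom_phi.
have sur_sq : surjective (fun x => sigma (q x)).
  by move=> b; have [a <-] := sur_sigma b; have [a' <-] := sur_q a; exists a'.
have [psi [hom_psi psi_lift]] := projective_dense_lift He_idem proj_P ISP_A'
  (comp_hom hom_q hom_sigma) sur_sq hom_phi.
by exists (fun x => q (psi x)); split; first exact: comp_hom.
Qed.
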